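(* Let $E$ be a finite set and $V \subset \mathbb R^E$ a linear subspace defining an oriented matroid $M$. If $G \subset E$ is an acyclic flat of $M$, then \[ \mathcal Y_V \cap \big((\mathbb P^1_{\mathbb R})^G \times \infty^{E \setminus G}\big) = \mathcal Y_{\pi_G(V)} \times \infty^{E \setminus G}. \]
   Context: $\mathbb P^1_{\mathbb R} = \mathbb R\cup\{\infty\}$. For a linear subspace $W \subset \mathbb R^S$ ($S$ finite), $\mathcal Y_W$ denotes the closure of $W \cap \mathbb R_{\geq 0}^S$ in $(\mathbb P^1_{\mathbb R})^S$ in the analytic topology. $\pi_G : \mathbb R^E \to \mathbb R^G$ is the coordinate projection. $(\mathbb P^1_{\mathbb R})^G \times \infty^{E\setminus G}$ is the set of points of $(\mathbb P^1_{\mathbb R})^E$ with all coordinates in $E\setminus G$ equal to $\infty$. Flats of $M$ are the zero sets $\{i: v_i=0\}$ of $v \in V$; a flat $G$ is acyclic if some $v \in V$ has $v_i = 0$ for $i \in G$ and $v_i > 0$ for $i \notin G$. *)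

From mathcomp Require Import all_boot all_order all_algebra.
From mathcomp Require Import reals.
Import Order.TTheory GRing.Theory Num.Theory.

Set Implicit Arguments.
Unset Strict Implicit.
Unset Printing Implicit Defensive.

Local Open Scope ring_scope.

Definition is_subspace (R : realType) (E : Type) (V : (E -> R) -> Prop) : Prop :=
  [/\ V (fun _ => 0),
      (forall x y, V x -> V y -> V (fun i => x i + y i)) &
      (forall (a : R) x, V x -> V (fun i => a * x i))].

(* P^1_R = R ∪ {∞}, with None standing for ∞. *)
Definition P1 (R : realType) := option R.

(* Basic neighbourhoods of the analytic topology on P^1_R, indexed by eps > 0:
   around a finite point a : the interval (a - eps, a + eps);
   around ∞ : {∞} ∪ {x : |x| > 1/eps}. *)
Definition P1near (R : realType) (eps : R) (p q : P1 R) : Prop :=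
  match p, q with
  | Some a, Some b => `|b - a| < eps
  | Some _, None => False
  | None, Some b => eps^-1 < `|b|
  | None, None => True
  end.

(* Closure in (P^1_R)^S (S finite, product of analytic topologies):
   p is in the closure of A iff every basic neighbourhood of p meets A. *)
Definition P1closure (R : realType) (S : Type) (A : (S -> P1 R) -> Prop)
  (p : S -> P1 R) : Prop :=
  forall eps : R, 0 < eps -> exists q, A q /\ forall i, P1near eps (p i) (q i).

(* Y_W : closure of W ∩ R_{>=0}^S inside (P^1_R)^S. *)
Definition Ycl (R : realType) (S : Type) (W : (S -> R) -> Prop) : (S -> P1 R) -> Prop :=
  P1closure (fun q => exists x, [/\ W x, (forall i, 0 <= x i) & q = (fun i => Some (x i))]).

(* Flats of the oriented matroid of V: zero sets of vectors of V. *)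
Definition is_flat (R : realType) (E : finType) (V : (E -> R) -> Prop) (G : {set E}) : Prop :=
  exists v, V v /\ forall i, (v i == 0) = (i \in G).

Definition is_acyclic_flat (R : realType) (E : finType) (V : (E -> R) -> Prop)
  (G : {set E}) : Prop :=
  is_flat V G /\
  exists v, [/\ V v, (forall i, i \in G -> v i = 0) & (forall i, i \notin G -> 0 < v i)].

Definition projG (R : realType) (E : finType) (G : {set E}) (x : E -> R) :
  {i : E | i \in G} -> R := fun j => x (proj1_sig j).

Definition projV (R : realType) (E : finType) (V : (E -> R) -> Prop) (G : {set E}) :
  ({i : E | i \in G} -> R) -> Prop :=
  fun y => exists x, V x /\ y = @projG R E G x.
Arguments projV [R E] V G _.

From mathcomp Require Import all_boot all_order all_algebra.
From mathcomp Require Import reals.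
From mathcomp Require Import lra.
Import Order.TTheory GRing.Theory Num.Theory.
Local Open Scope ring_scope.

(* Restricting nonnegative approximants in V to G gives approximants in
   pi_G(V), which is one inclusion.  Conversely, if v in V vanishes on G and
   is positive off G, then adding a large multiple of v to an approximant
   x' in V of a point of Y_{pi_G(V)} leaves the G-coordinates unchanged and
   pushes all other coordinates towards +infinity, hence towards the
   coordinate value infinity of P^1. *)

Lemma exists_shift_ge (R : realFieldType) (E : finType) (P : pred E)
    (x v : E -> R) (M : R) :
  (forall i, P i -> 0 < v i) ->
  exists t, forall i, P i -> M <= x i + t * v i.
Proof.
move=> v_gt0; pose F i := (`|x i| + `|M|) / v i.
exists (\sum_(k | P k) F k) => i Pi.
have F_le_sum : F i <= \sum_(k | P k) F k.
  rewrite (bigD1 i) //= lerDl sumr_ge0 // => k /andP [Pk _].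
  by rewrite divr_ge0 ?addr_ge0 // ltW ?v_gt0.
have : F i * v i <= (\sum_(k | P k) F k) * v i by rewrite ler_wpM2r // ltW ?v_gt0.
rewrite divfK ?gt_eqF ?v_gt0 //.
have := ler_norm (- x i); have := ler_norm M; rewrite normrN; lra.
Qed.

Lemma P1near_None (R : realType) (eps b : R) :
  0 < eps -> eps^-1 < b -> P1near eps None (Some b).
Proof.
move=> eps_gt0 b_gt /=; have : 0 < eps^-1 by rewrite invr_gt0.
by move=> ?; rewrite ger0_norm; lra.
Qed.

Section AcyclicFlat.

Context {R : realType} {E : finType} {V : (E -> R) -> Prop} {G : {set E}}.

Lemma Ycl_projV (p : E -> P1 R) :
  Ycl V p -> Ycl (projV V G) (fun j : {i : E | i \in G} => p (proj1_sig j)).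
Proof.
move=> Yp eps eps_gt0; have [_ [[x [Vx x_ge0 ->]] near]] := Yp eps eps_gt0.
exists (fun j => Some (x (proj1_sig j))); split; last by move=> j; exact: near.
by exists (fun j => x (proj1_sig j)); split=> //; exists x.
Qed.

Lemma Ycl_lift_projV {v : E -> R} {p : E -> P1 R} :
  is_subspace V -> V v ->
  (forall i, i \in G -> v i = 0) -> (forall i, i \notin G -> 0 < v i) ->
  (forall i, i \notin G -> p i = None) ->
  Ycl (projV V G) (fun j : {i : E | i \in G} => p (proj1_sig j)) -> Ycl V p.
Proof.
move=> [_ VD VZ] Vv v_G v_notG p_notG Yp eps eps_gt0.
have [_ [[_ [[x' [Vx' ->]] x'_ge0 ->]] near]] := Yp eps eps_gt0.
have [t x_ge] := @exists_shift_ge _ _ _ x' v (eps^-1 + 1) v_notG.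
pose x i := x' i + t * v i.
have x_G i : i \in G -> x i = x' i by move=> Gi; rewrite /x v_G // mulr0 addr0.
have inv_gt0 : 0 < eps^-1 by rewrite invr_gt0.
exists (fun i => Some (x i)); split.
  exists x; split=> //; first by apply: VD => //; exact: VZ.
  move=> i; have [Gi|notGi] := boolP (i \in G).
    by rewrite x_G //; exact: (x'_ge0 (exist _ i Gi)).
  by have := x_ge i notGi; rewrite /x; lra.
move=> i; have [Gi|notGi] := boolP (i \in G).
  by have := near (exist _ i Gi); rewrite /= x_G.
by rewrite p_notG //; apply: P1near_None => //; have := x_ge i notGi; rewrite /x; lra.
Qed.

End AcyclicFlat.

Theorem corollary3p4 (R : realType) (E : finType) (V : (E -> R) -> Prop)
  (G : {set E}) :
  is_subspace V -> is_acyclic_flat V G ->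
  forall p : E -> P1 R,
    (Ycl V p /\ (forall i, i \notin G -> p i = None)) <->
    (Ycl (projV V G) (fun j : {i : E | i \in G} => p (proj1_sig j)) /\
     (forall i, i \notin G -> p i = None)).
Proof.
move=> subV [_ [v [Vv v_G v_notG]]] p.
split=> -[Yp p_notG]; split=> //; first exact: Ycl_projV.
exact: (Ycl_lift_projV subV Vv v_G v_notG p_notG).
Qed.
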